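(* Let $d\ge2$ be an integer. For $\lambda\in(0,1)$ let $\bar F_\lambda$ be the solution of $\bar F'(w)=\lambda\bar F(w)^d-\bar F(w)$, $\bar F(0)=\lambda$, and let $\mathbb E[W_\lambda]=\int_0^\infty\bar F_\lambda(w)^d\,dw$. Then $$\lim_{\lambda\to1^-}-\frac{\mathbb E[W_\lambda]}{\log(1-\lambda)}=\frac1{d-1}.$$
   Context: $\bar F_\lambda$ is the limiting ccdf of the workload of a queue under the LL($d$) policy (exponential job sizes of mean 1, arrival rate $\lambda$ per server), and $\mathbb E[W_\lambda]$ the corresponding mean waiting time. *)

From Stdlib Require Import Reals.
From Coquelicot Require Import Coquelicot.
Open Scope R_scope.

Definition is_LL_ccdf (d : nat) (lam : R) (Fbar : R -> R) : Prop :=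
  Fbar 0 = lam /\
  filterlim Fbar (at_right 0) (locally lam) /\
  (forall w, 0 < w -> is_derive Fbar w (lam * Fbar w ^ d - Fbar w)).

Definition mean_wait (d : nat) (Fbar : R -> R) : R :=
  RInt_gen (fun w => Fbar w ^ d) (at_point 0) (Rbar_locally p_infty).

From Stdlib Require Import Reals Lra Lia Classical.
From Coquelicot Require Import Coquelicot.
Open Scope R_scope.

(* Write d = k + 1 with k >= 1 and A = lam^(-k) - lam.  The ODE
   F' = lam F^(k+1) - F, F(0) = lam is solved in closed form:
   F(w)^k (lam + A e^(k w)) = 1.  This is proved by an integrating factor:
   R = F^k (lam + A e^(k w)) - 1 satisfies the linear equation R' = k lam F^k R
   with R(0) = 0, hence vanishes.  Consequently F^k is the derivative of the
   explicit function P(T) = T/lam - ln(lam + A e^(k T))/(k lam), and comparing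
   derivatives gives, for the truncated integral H(T) = int_0^T F^(k+1),
       H(T) <= P(T) - P(0)          (since F^(k+1) <= F^k),
       P(T) - P(0) - lam <= lam H(T) (since lam H - F - P is nondecreasing).
   H is nondecreasing and bounded, so E[W] = lim H exists, and with
   Q = -ln(1 - lam^(k+1)) we get  k lam E[W] <= Q <= k lam^2 (E[W] + 1) + ln 2.
   (The solution, given on [0, oo), is first extended evenly to a continuous
   function on R so that the integral calculus applies.)
   Finally Q = -ln(1 - lam) + O(1), so E[W] / (-ln(1 - lam)) -> 1/k, which the
   main theorem obtains by a squeeze with an explicit relative error. *)

Lemma nondecreasing_of_deriv_nonneg (h dh : R -> R) (a b : R) :
  a <= b ->
  (forall x, a < x < b -> is_derive h x (dh x)) ->
  (forall x, a <= x <= b -> 0 <= dh x) ->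
  (forall x, a <= x <= b -> continuous h x) ->
  h a <= h b.
Proof.
  intros Hab Hd Hpos Hc.
  pose proof (MVT_gen h a b dh) as Hmvt. cbv zeta in Hmvt.
  rewrite Rmin_left, Rmax_right in Hmvt by lra.
  destruct Hmvt as [c [Hcab Hdiff]].
  - intros x Hx. apply Hd, Hx.
  - intros x Hx. apply continuity_pt_filterlim, Hc, Hx.
  - pose proof (Hpos c Hcab). nra.
Qed.

Lemma constant_of_deriv_zero (h : R -> R) (a b : R) :
  a <= b ->
  (forall x, a < x < b -> is_derive h x 0) ->
  (forall x, a <= x <= b -> continuous h x) ->
  h a = h b.
Proof.
  intros Hab Hd Hc.
  pose proof (MVT_gen h a b (fun _ => 0)) as Hmvt. cbv zeta in Hmvt.
  rewrite Rmin_left, Rmax_right in Hmvt by lra.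
  destruct Hmvt as [c [_ Hdiff]].
  - intros x Hx. apply Hd, Hx.
  - intros x Hx. apply continuity_pt_filterlim, Hc, Hx.
  - lra.
Qed.

Lemma continuous_pow_fun (g : R -> R) (n : nat) (x : R) :
  continuous g x -> continuous (fun t => g t ^ n) x.
Proof.
  intros Hg. induction n as [|n IH]; simpl.
  - apply continuous_const.
  - apply (continuous_mult g (fun t => g t ^ n)); assumption.
Qed.

Lemma is_derive_RInt_continuous (g : R -> R) (a x : R) :
  (forall t, continuous g t) -> is_derive (fun T => RInt g a T) x (g x).
Proof.
  intros Hc. apply (is_derive_RInt g (fun T => RInt g a T) a x); auto.
  exists (mkposreal 1 Rlt_0_1). intros y _.
  apply (@RInt_correct R_CompleteNormedModule), ex_RInt_continuous.
  intros; auto.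
Qed.

(* Uniqueness for the linear ODE R' = a R: with the integrating factor
   exp(-int_0^x a), the solution vanishing at 0 vanishes on [0, oo). *)
Lemma linear_ode_zero (a r : R -> R) :
  (forall x, continuous a x) -> (forall x, continuous r x) -> r 0 = 0 ->
  (forall x, 0 < x -> is_derive r x (a x * r x)) ->
  forall w, 0 <= w -> r w = 0.
Proof.
  intros Ha Hr Hr0 Hode w Hw.
  set (E := fun x => exp (- RInt a 0 x)).
  assert (HE : forall x, is_derive E x (- a x * E x)).
  { intros x. unfold E.
    apply (is_derive_comp exp (fun y => - RInt a 0 y)); [apply is_derive_exp|].
    apply (is_derive_opp (fun y => RInt a 0 y)), is_derive_RInt_continuous, Ha. }
  assert (Hconst : r 0 * E 0 = r w * E w).
  { apply (constant_of_deriv_zero (fun x => r x * E x)); [exact Hw| |].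
    - intros x Hx.
      pose proof (is_derive_mult r E x _ _ (Hode x (proj1 Hx)) (HE x) Rmult_comm)
        as Hd.
      change (is_derive (fun y => r y * E y) x
                (a x * r x * E x + r x * (- a x * E x))) in Hd.
      replace (a x * r x * E x + r x * (- a x * E x)) with 0 in Hd
        by ring.
      exact Hd.
    - intros x _. apply (continuous_mult r E); [apply Hr|].
      apply (ex_derive_continuous E). eexists; apply HE. }
  rewrite Hr0, Rmult_0_l in Hconst.
  assert (0 < E w) by apply exp_pos. nra.
Qed.

Lemma monotone_bounded_limit (h : R -> R) (M : R) :
  (forall T1 T2, 0 <= T1 <= T2 -> h T1 <= h T2) ->
  (forall T, 0 <= T -> h T <= M) ->
  exists l : R, filterlim h (Rbar_locally p_infty) (locally l) /\
            (forall T, 0 <= T -> h T <= l) /\ l <= M.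
Proof.
  intros Hmono Hbound.
  set (E := fun y => exists T, 0 <= T /\ y = h T).
  destruct (completeness E) as [l [Hub Hlub]].
  - exists M. intros y [T [HT ->]]. auto.
  - exists (h 0), 0. split; [lra | reflexivity].
  - exists l. split; [|split].
    + apply filterlim_locally. intros eps. pose proof (cond_pos eps).
      destruct (classic (exists T, 0 <= T /\ l - eps < h T)) as [[T0 [HT0 Hh]]|Hnone].
      * exists T0. intros x Hx. change (Rabs (h x - l) < eps). apply Rabs_def1.
        -- assert (h x <= l) by (apply Hub; exists x; split; [lra|auto]). lra.
        -- assert (h T0 <= h x) by (apply Hmono; lra). lra.
      * exfalso. assert (l <= l - eps); [|lra].
        apply Hlub. intros y [T [HT ->]].
        destruct (Rle_lt_dec (h T) (l - eps)) as [h1|h1]; [exact h1|].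
        exfalso. apply Hnone. exists T. auto.
    + intros T HT. apply Hub. exists T. auto.
    + apply Hlub. intros y [T [HT ->]]. auto.
Qed.

Lemma is_RInt_gen_of_partial_limit (g : R -> R) (l : R) :
  (forall x, continuous g x) ->
  filterlim (fun T => RInt g 0 T) (Rbar_locally p_infty) (locally l) ->
  is_RInt_gen g (at_point 0) (Rbar_locally p_infty) l.
Proof.
  intros Hc Hlim.
  set (H := fun T => RInt g 0 T).
  assert (HD : forall x, Derive H x = g x)
    by (intros x; apply is_derive_unique, is_derive_RInt_continuous, Hc).
  assert (Hint : is_RInt_gen (Derive H) (at_point 0) (Rbar_locally p_infty) (l - H 0)).
  { apply is_RInt_gen_Derive.
    - apply filter_forall. intros ab x _. eexists. apply is_derive_RInt_continuous, Hc.
    - apply filter_forall. intros ab x _.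
      apply (continuous_ext g); [intros; symmetry; apply HD | apply Hc].
    - intros P HP. apply locally_singleton in HP. exact HP.
    - exact Hlim. }
  assert (H0 : H 0 = 0) by (unfold H; rewrite RInt_point; reflexivity).
  rewrite H0, Rminus_0_r in Hint.
  apply (is_RInt_gen_ext (Derive H)); [|exact Hint].
  apply filter_forall. intros ab x _. apply HD.
Qed.

Lemma exp_le_mono (x y : R) : x <= y -> exp x <= exp y.
Proof.
  intros [Hlt|Heq]; [left; apply exp_increasing, Hlt | right; rewrite Heq; reflexivity].
Qed.

Lemma one_minus_pow_le (x : R) (n : nat) :
  0 <= x <= 1 -> 1 - x ^ n <= INR n * (1 - x).
Proof.
  intros Hx. induction n as [|n IH]; [simpl; lra|].
  rewrite S_INR. simpl.
  assert (0 <= x ^ n <= 1) by (split; [apply pow_le|rewrite <- (pow1 n); apply pow_incr]; lra).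
  nra.
Qed.

(* The explicit data of the closed-form solution: the constant A and the
   primitive P of F^k. *)
Definition ll_A (k : nat) (lam : R) : R := / lam ^ k - lam.

Definition ll_primitive (k : nat) (lam T : R) : R :=
  T / lam - ln (lam + ll_A k lam * exp (INR k * T)) / (INR k * lam).

Definition partial_wait (d : nat) (F : R -> R) (T : R) : R :=
  RInt (fun t => F t ^ d) 0 T.

Section LL_solution.

Variables (k : nat) (lam : R) (G : R -> R).
Hypothesis Hk : (1 <= k)%nat.
Hypothesis Hlam : 0 < lam < 1.

Lemma lam_pow_bounds : 0 < lam ^ k <= 1.
Proof.
  split; [apply pow_lt; lra|]. rewrite <- (pow1 k). apply pow_incr. lra.
Qed.

Lemma ll_A_pos : 0 < ll_A k lam.
Proof.
  pose proof lam_pow_bounds.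
  unfold ll_A. replace (/ lam ^ k - lam) with ((1 - lam * lam ^ k) / lam ^ k)
    by (field; lra).
  apply Rdiv_lt_0_compat; nra.
Qed.

Lemma ll_log_ratio :
  ln (lam + ll_A k lam) - ln (ll_A k lam) = - ln (1 - lam ^ S k).
Proof.
  pose proof lam_pow_bounds.
  assert (Hsum : lam + ll_A k lam = / lam ^ k) by (unfold ll_A; ring).
  assert (HA : ll_A k lam = (1 - lam ^ S k) * / lam ^ k)
    by (unfold ll_A; simpl; field; lra).
  assert (0 < 1 - lam ^ S k) by (simpl; nra).
  rewrite Hsum, HA, ln_mult by (auto; apply Rinv_0_lt_compat; lra). ring.
Qed.

Lemma ll_denominator_pos (x : R) : 0 < lam + ll_A k lam * exp (INR k * x).
Proof.
  pose proof ll_A_pos. pose proof (exp_pos (INR k * x)). nra.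
Qed.

Lemma INR_k_pos : 0 < INR k.
Proof. apply lt_0_INR. lia. Qed.

(* P' = 1 / (lam + A e^(k x)), which will turn out to be G^k. *)
Lemma ll_primitive_deriv (x : R) :
  is_derive (ll_primitive k lam) x (/ (lam + ll_A k lam * exp (INR k * x))).
Proof.
  pose proof (ll_denominator_pos x). pose proof INR_k_pos.
  unfold ll_primitive. auto_derive; [lra|].
  field. repeat split; lra.
Qed.

Lemma ll_primitive_0 :
  ll_primitive k lam 0 = - ln (lam + ll_A k lam) / (INR k * lam).
Proof.
  unfold ll_primitive. rewrite Rmult_0_r, exp_0, Rmult_1_r. unfold Rdiv. ring.
Qed.

(* P is bounded above by its limit at infinity, -ln A / (k lam). *)
Lemma ll_primitive_upper (T : R) :
  ll_primitive k lam T <= - ln (ll_A k lam) / (INR k * lam).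
Proof.
  pose proof ll_A_pos. pose proof INR_k_pos. pose proof (exp_pos (INR k * T)).
  assert (Hln : ln (ll_A k lam) + INR k * T
                <= ln (lam + ll_A k lam * exp (INR k * T))).
  { rewrite <- (ln_exp (INR k * T)) at 1. rewrite <- ln_mult by assumption.
    apply ln_le; [apply Rmult_lt_0_compat|]; lra. }
  unfold ll_primitive.
  apply (Rmult_le_reg_r (INR k * lam)); [nra|].
  field_simplify; lra.
Qed.

(* P comes within ln 2 / (k lam) of that bound at T = |ln A| / k, where
   A e^(k T) >= 1 >= lam. *)
Lemma ll_primitive_lower :
  exists T, 0 <= T /\
    - (ln 2 + ln (ll_A k lam)) / (INR k * lam) <= ll_primitive k lam T.
Proof.
  pose proof ll_A_pos as HA. pose proof INR_k_pos.
  set (A := ll_A k lam) in *.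
  exists (Rabs (ln A) / INR k). split.
  { apply Rdiv_le_0_compat; [apply Rabs_pos | lra]. }
  set (T := Rabs (ln A) / INR k).
  assert (HkT : INR k * T = Rabs (ln A)) by (unfold T; field; lra).
  assert (Hbig : 1 <= A * exp (INR k * T)).
  { rewrite HkT. replace 1 with (A * exp (- ln A))
      by (rewrite exp_Ropp, exp_ln; [field|]; lra).
    apply Rmult_le_compat_l; [lra|].
    apply exp_le_mono. rewrite <- Rabs_Ropp. apply Rle_abs. }
  assert (Hln : ln (lam + A * exp (INR k * T)) <= ln 2 + ln A + INR k * T).
  { rewrite <- (ln_exp (INR k * T)) at 2.
    rewrite <- ln_mult, <- ln_mult by (try apply Rmult_lt_0_compat; try apply exp_pos; lra).
    apply ln_le; [pose proof (exp_pos (INR k * T)); nra | lra]. }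
  unfold ll_primitive. fold A.
  apply (Rmult_le_reg_r (INR k * lam)); [nra|].
  field_simplify; [|lra..]. rewrite HkT in Hln |- *. nra.
Qed.

Hypothesis G0 : G 0 = lam.
Hypothesis Gcont : forall x, continuous G x.
Hypothesis Gode : forall w, 0 < w -> is_derive G w (lam * G w ^ S k - G w).

Lemma ll_closed_form (w : R) :
  0 <= w -> G w ^ k * (lam + ll_A k lam * exp (INR k * w)) = 1.
Proof.
  set (X := fun x => lam + ll_A k lam * exp (INR k * x)).
  assert (HX : forall x, is_derive X x (ll_A k lam * (INR k * exp (INR k * x)))).
  { intros x. unfold X. auto_derive; [auto | ring]. }
  intros Hw.
  enough (G w ^ k * X w - 1 = 0) by (unfold X in *; lra).
  refine (linear_ode_zero (fun x => INR k * lam * G x ^ k)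
                          (fun x => G x ^ k * X x - 1) _ _ _ _ w Hw).
  - intros x. apply (continuous_mult (fun _ => INR k * lam) (fun t => G t ^ k)).
    + apply continuous_const.
    + apply continuous_pow_fun, Gcont.
  - intros x. apply (continuous_minus (fun t => G t ^ k * X t) (fun _ => 1));
      [|apply continuous_const].
    apply (continuous_mult (fun t => G t ^ k) X); [apply continuous_pow_fun, Gcont|].
    apply (ex_derive_continuous X). eexists; apply HX.
  - pose proof lam_pow_bounds.
    unfold X, ll_A. rewrite G0, Rmult_0_r, exp_0. field. lra.
  - intros x Hx.
    pose proof (is_derive_pow G k x _ (Gode x Hx)) as HGk.
    pose proof (is_derive_mult (fun t => G t ^ k) X x _ _ HGk (HX x) Rmult_comm)
      as Hprod.
    pose proof (is_derive_minus _ (fun _ => 1) x _ _ Hprod (is_derive_const 1 x))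
      as Hd.
    set (A := ll_A k lam) in *. set (g := G x) in *. set (e := exp (INR k * x)) in *.
    change (is_derive (fun t => G t ^ k * X t - 1) x
              (INR k * (lam * g ^ S k - g) * g ^ pred k * X x
               + g ^ k * (A * (INR k * e)) - 0)) in Hd.
    replace (INR k * (lam * g ^ S k - g) * g ^ pred k * X x
             + g ^ k * (A * (INR k * e)) - 0)
      with (INR k * lam * g ^ k * (g ^ k * X x - 1)) in Hd.
    + exact Hd.
    + unfold X. fold e. destruct k as [|j]; [lia|]. simpl. ring.
Qed.

Lemma ll_pow_k (w : R) :
  0 <= w -> G w ^ k = / (lam + ll_A k lam * exp (INR k * w)).
Proof.
  intros Hw. pose proof (ll_closed_form w Hw). pose proof (ll_denominator_pos w).
  apply (Rmult_eq_reg_r (lam + ll_A k lam * exp (INR k * w))); [|lra].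
  rewrite Rinv_l; lra.
Qed.

(* The solution is a ccdf: 0 < G <= 1.  Positivity: G never vanishes by the
   closed form, and G(0) = lam > 0. *)
Lemma ll_pos_le1 (w : R) : 0 <= w -> 0 < G w <= 1.
Proof.
  assert (Hnz : forall w, 0 <= w -> G w <> 0).
  { intros v Hv Hz. pose proof (ll_closed_form v Hv) as Hs.
    rewrite Hz, pow_i in Hs by lia. lra. }
  intros Hw.
  assert (Hpos : 0 < G w).
  { destruct (Rlt_le_dec 0 (G w)) as [h|h]; [exact h|exfalso].
    destruct (IVT_gen G 0 w 0) as [z [Hz HGz]].
    - intros x. apply continuity_pt_filterlim, Gcont.
    - rewrite G0, Rmin_right, Rmax_left; lra.
    - rewrite Rmin_left, Rmax_right in Hz by lra. exact (Hnz z (proj1 Hz) HGz). }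
  split; [exact Hpos|].
  pose proof lam_pow_bounds. pose proof ll_A_pos.
  assert (Hden : 1 <= lam + ll_A k lam * exp (INR k * w)).
  { assert (1 <= exp (INR k * w)).
    { rewrite <- exp_0. apply exp_le_mono. pose proof INR_k_pos. nra. }
    assert (1 <= / lam ^ k).
    { rewrite <- Rinv_1. apply Rinv_le_contravar; lra. }
    unfold ll_A in *. nra. }
  assert (Hk1 : G w ^ k <= 1).
  { pose proof (ll_closed_form w Hw). pose proof (pow_lt (G w) k Hpos). nra. }
  destruct (Rle_lt_dec (G w) 1) as [h|h]; [exact h|].
  pose proof (Rlt_pow_R1 (G w) k h ltac:(lia)). lra.
Qed.

Lemma partial_wait_deriv (x : R) : is_derive (partial_wait (S k) G) x (G x ^ S k).
Proof.
  apply is_derive_RInt_continuous. intros t. apply continuous_pow_fun, Gcont.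
Qed.

Lemma partial_wait_0 : partial_wait (S k) G 0 = 0.
Proof. unfold partial_wait. rewrite RInt_point. reflexivity. Qed.

Lemma partial_wait_continuous (x : R) : continuous (partial_wait (S k) G) x.
Proof. apply (ex_derive_continuous (partial_wait (S k) G)). eexists; apply partial_wait_deriv. Qed.

Lemma ll_primitive_continuous (x : R) : continuous (ll_primitive k lam) x.
Proof. apply (ex_derive_continuous (ll_primitive k lam)). eexists; apply ll_primitive_deriv. Qed.

Lemma partial_wait_mono (T1 T2 : R) :
  0 <= T1 <= T2 -> partial_wait (S k) G T1 <= partial_wait (S k) G T2.
Proof.
  intros HT. apply (nondecreasing_of_deriv_nonneg _ (fun t => G t ^ S k)); [lra| | |].
  - intros x _. apply partial_wait_deriv.
  - intros x Hx. apply pow_le. pose proof (ll_pos_le1 x ltac:(lra)). lra.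
  - intros x _. apply partial_wait_continuous.
Qed.

(* Upper bound: H' = G^(k+1) <= G^k = P'. *)
Lemma partial_wait_upper (T : R) :
  0 <= T -> partial_wait (S k) G T <= ll_primitive k lam T - ll_primitive k lam 0.
Proof.
  intros HT. pose proof partial_wait_0.
  enough (ll_primitive k lam 0 - partial_wait (S k) G 0
          <= ll_primitive k lam T - partial_wait (S k) G T) by lra.
  apply (nondecreasing_of_deriv_nonneg
           (fun t => ll_primitive k lam t - partial_wait (S k) G t)
           (fun t => G t ^ k - G t ^ S k)); [exact HT| | |].
  - intros x Hx. rewrite ll_pow_k by lra.
    apply (is_derive_minus (ll_primitive k lam) (partial_wait (S k) G));
      [apply ll_primitive_deriv | apply partial_wait_deriv].
  - intros x Hx. pose proof (ll_pos_le1 x ltac:(lra)).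
    pose proof (pow_lt (G x) k ltac:(lra)). simpl. nra.
  - intros x _. apply (continuous_minus (ll_primitive k lam) (partial_wait (S k) G));
      [apply ll_primitive_continuous | apply partial_wait_continuous].
Qed.

(* Lower bound: lam H - G - P has derivative G - G^k >= 0. *)
Lemma partial_wait_lower (T : R) :
  0 <= T ->
  ll_primitive k lam T - ll_primitive k lam 0 - lam <= lam * partial_wait (S k) G T.
Proof.
  intros HT.
  assert (Hmono : lam * partial_wait (S k) G 0 - G 0 - ll_primitive k lam 0
                  <= lam * partial_wait (S k) G T - G T - ll_primitive k lam T).
  { apply (nondecreasing_of_deriv_nonneg
             (fun t => lam * partial_wait (S k) G t - G t - ll_primitive k lam t)
             (fun t => G t - G t ^ k)); [exact HT| | |].
    - intros x Hx.
      pose proof (is_derive_scal _ x lam _ (partial_wait_deriv x)) as H1.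
      pose proof (is_derive_minus _ _ x _ _ H1 (Gode x (proj1 Hx))) as H2.
      pose proof (is_derive_minus _ _ x _ _ H2 (ll_primitive_deriv x)) as H3.
      rewrite <- ll_pow_k in H3 by lra.
      change (is_derive
                (fun t => lam * partial_wait (S k) G t - G t - ll_primitive k lam t) x
                (lam * G x ^ S k - (lam * G x ^ S k - G x) - G x ^ k)) in H3.
      replace (lam * G x ^ S k - (lam * G x ^ S k - G x) - G x ^ k)
        with (G x - G x ^ k) in H3 by ring.
      exact H3.
    - intros x Hx. pose proof (ll_pos_le1 x ltac:(lra)).
      destruct k as [|j]; [lia|]. simpl.
      assert (0 <= G x ^ j <= 1)
        by (split; [apply pow_le | rewrite <- (pow1 j); apply pow_incr]; lra).
      nra.
    - intros x _.
      apply (continuous_minus (fun t => lam * partial_wait (S k) G t - G t));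
        [|apply ll_primitive_continuous].
      apply (continuous_minus (fun t => lam * partial_wait (S k) G t)); [|apply Gcont].
      apply (continuous_mult (fun _ => lam) (partial_wait (S k) G));
        [apply continuous_const | apply partial_wait_continuous]. }
  rewrite partial_wait_0, G0 in Hmono. pose proof (ll_pos_le1 T HT). lra.
Qed.

Lemma ll_wait_bounds :
  exists l : R,
    is_RInt_gen (fun w => G w ^ S k) (at_point 0) (Rbar_locally p_infty) l /\
    INR k * lam * l <= - ln (1 - lam ^ S k) /\
    - ln (1 - lam ^ S k) - ln 2 <= INR k * lam ^ 2 * (l + 1).
Proof.
  pose proof ll_primitive_0 as HP0. pose proof ll_log_ratio as HQ.
  pose proof INR_k_pos. assert (Hkl : 0 < INR k * lam) by nra.
  set (A := ll_A k lam) in *. set (P := ll_primitive k lam) in *.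
  destruct (monotone_bounded_limit (partial_wait (S k) G)
              (- ln A / (INR k * lam) - P 0)) as [l [Hlim [Hle HlM]]].
  { intros T1 T2. apply partial_wait_mono. }
  { intros T HT. pose proof (partial_wait_upper T HT).
    pose proof (ll_primitive_upper T). unfold P, A in *. lra. }
  exists l. split; [|split].
  - apply is_RInt_gen_of_partial_limit; [|exact Hlim].
    intros x. apply continuous_pow_fun, Gcont.
  - (* l <= sup P - P(0) = Q / (k lam) *)
    rewrite HP0 in HlM.
    apply (Rmult_le_reg_r (/ (INR k * lam))); [apply Rinv_0_lt_compat, Hkl|].
    replace (INR k * lam * l * / (INR k * lam)) with l by (field; lra).
    replace (- ln (1 - lam ^ S k) * / (INR k * lam))
      with (- ln A / (INR k * lam) - - ln (lam + A) / (INR k * lam))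
      by (rewrite <- HQ; field; lra).
    exact HlM.
  - (* lam l >= lam H(T) >= P(T) - P(0) - lam >= (Q - ln 2)/(k lam) - lam *)
    destruct ll_primitive_lower as [T [HT HPT]]. fold A P in HPT.
    pose proof (partial_wait_lower T HT) as Hlow. fold P in Hlow. rewrite HP0 in Hlow.
    assert (Hcmp : lam * partial_wait (S k) G T <= lam * l)
      by (apply Rmult_le_compat_l; [lra | apply Hle, HT]).
    assert (Hkey : (- ln (1 - lam ^ S k) - ln 2) / (INR k * lam) - lam <= lam * l).
    { replace ((- ln (1 - lam ^ S k) - ln 2) / (INR k * lam))
        with (- (ln 2 + ln A) / (INR k * lam) - - ln (lam + A) / (INR k * lam))
        by (rewrite <- HQ; field; lra).
      lra. }
    apply (Rmult_le_compat_r (INR k * lam)) in Hkey; [|lra].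
    replace (((- ln (1 - lam ^ S k) - ln 2) / (INR k * lam) - lam) * (INR k * lam))
      with (- ln (1 - lam ^ S k) - ln 2 - INR k * lam ^ 2) in Hkey by (field; lra).
    replace (INR k * lam ^ 2 * (l + 1)) with (lam * l * (INR k * lam) + INR k * lam ^ 2)
      by ring.
    lra.
Qed.

End LL_solution.

Lemma even_extension_continuous (lam : R) (f : R -> R) :
  f 0 = lam -> filterlim f (at_right 0) (locally lam) ->
  (forall w, 0 < w -> ex_derive f w) ->
  forall x, continuous (fun w => f (Rabs w)) x.
Proof.
  intros H0 Hright Hd x.
  destruct (Req_dec x 0) as [->|Hx].
  - unfold continuous. rewrite Rabs_R0, H0.
    intros P HP. destruct (Hright P HP) as [e He].
    exists e. intros y Hy. destruct (Req_dec y 0) as [->|Hy0].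
    + rewrite Rabs_R0, H0. now apply locally_singleton.
    + apply He; [|apply Rabs_pos_lt, Hy0].
      change (Rabs (Rabs y - 0) < e). change (Rabs (y - 0) < e) in Hy.
      rewrite Rminus_0_r, Rabs_Rabsolu in *. exact Hy.
  - apply (continuous_comp Rabs f).
    + apply continuity_pt_filterlim, Rcontinuity_abs.
    + apply (ex_derive_continuous f), Hd, Rabs_pos_lt, Hx.
Qed.

Lemma even_extension_derive (f : R -> R) (df w : R) :
  0 < w -> is_derive f w df -> is_derive (fun t => f (Rabs t)) w df.
Proof.
  intros Hw Hd. apply (is_derive_ext_loc f); [|exact Hd].
  exists (mkposreal w Hw). intros y Hy.
  change (Rabs (y - w) < w) in Hy. apply Rabs_def2 in Hy.
  rewrite Rabs_right by lra. reflexivity.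
Qed.

Lemma mean_wait_bounds (k : nat) (lam : R) (f : R -> R) :
  (1 <= k)%nat -> 0 < lam < 1 -> is_LL_ccdf (S k) lam f ->
  INR k * lam * mean_wait (S k) f <= - ln (1 - lam ^ S k) /\
  - ln (1 - lam ^ S k) - ln 2 <= INR k * lam ^ 2 * (mean_wait (S k) f + 1).
Proof.
  intros Hk Hl [Hf0 [Hfright Hfode]].
  set (G := fun w => f (Rabs w)).
  assert (HGf : forall w, 0 < w -> G w = f w)
    by (intros w Hw; unfold G; rewrite Rabs_right by lra; reflexivity).
  destruct (ll_wait_bounds k lam G Hk Hl) as [l [Hint Hbounds]].
  - unfold G. rewrite Rabs_R0. exact Hf0.
  - apply (even_extension_continuous lam f Hf0 Hfright).
    intros w Hw. eexists. apply Hfode, Hw.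
  - intros w Hw. rewrite HGf by exact Hw.
    apply (even_extension_derive f), Hfode, Hw; exact Hw.
  - enough (Hmean : mean_wait (S k) f = l) by (rewrite Hmean; exact Hbounds).
    unfold mean_wait. apply is_RInt_gen_unique.
    apply (is_RInt_gen_ext (fun w => G w ^ S k)); [|exact Hint].
    apply (Filter_prod _ _ _ (fun x => x = 0) (fun y => 0 < y)).
    + reflexivity.
    + exists 0. auto.
    + intros x y -> Hy z Hz. simpl in Hy, Hz. rewrite Rmin_left, Rmax_right in Hz by lra.
      rewrite HGf by lra. reflexivity.
Qed.

Lemma log_gap (n : nat) (lam : R) :
  (1 <= n)%nat -> 0 < lam < 1 ->
  - ln (1 - lam) - ln (INR n) <= - ln (1 - lam ^ n) <= - ln (1 - lam).
Proof.
  intros Hn Hl.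
  assert (Hpow : lam ^ n <= lam).
  { destruct n as [|j]; [lia|]. simpl.
    assert (lam ^ j <= 1) by (rewrite <- (pow1 j); apply pow_incr; lra). nra. }
  assert (HnR : 1 <= INR n) by (apply (le_INR 1); lia).
  pose proof (one_minus_pow_le lam n ltac:(lra)).
  split.
  - assert (Hln : ln (1 - lam ^ n) <= ln (INR n * (1 - lam))) by (apply ln_le; lra).
    rewrite ln_mult in Hln by lra. lra.
  - apply Ropp_le_contravar, ln_le; lra.
Qed.

Lemma ratio_estimate (kk lam m l c : R) :
  1 <= kk -> 1/2 <= lam <= 1 -> 0 < m -> 0 <= c ->
  kk * lam * l <= m -> m - c <= kk * lam ^ 2 * (l + 1) ->
  Rabs (l / m - 1 / kk) <= 2 * (1 - lam) + (4 * c + 1) * / m.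
Proof.
  intros Hkk Hl Hm Hc Hup Hlow.
  set (u := / m). set (r := l / m). set (q := 1 / kk).
  assert (Hu : 0 < u) by (apply Rinv_0_lt_compat, Hm).
  assert (Hq : kk * q = 1) by (unfold q; field; lra).
  assert (Hq0 : 0 < q) by (unfold q; apply Rdiv_lt_0_compat; lra).
  assert (Hq1 : q <= 1) by nra.
  assert (Hl_eq : l = r * m) by (unfold r; field; lra).
  assert (Hup' : lam * r <= q).
  { apply (Rmult_le_reg_r (kk * m)); [nra|].
    replace (q * (kk * m)) with (kk * q * m) by ring. rewrite Hq. nra. }
  assert (Hlow' : q * (1 - c * u) <= lam ^ 2 * (r + u)).
  { apply (Rmult_le_reg_r (kk * m)); [nra|].
    replace (q * (1 - c * u) * (kk * m)) with (kk * q * (m - c))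
      by (unfold u; field; lra).
    rewrite Hq, Rmult_1_l.
    replace (lam ^ 2 * (r + u) * (kk * m)) with (kk * lam ^ 2 * (l + 1))
      by (rewrite Hl_eq; unfold u; field; lra).
    exact Hlow. }
  assert (Hlower : q - 4 * c * u <= r + u).
  { apply (Rmult_le_reg_l (lam ^ 2)); [simpl; nra|].
    assert (1 <= 4 * lam ^ 2) by (simpl; nra).
    assert (lam ^ 2 <= 1) by (simpl; nra).
    assert (0 <= c * u) by nra.
    nra. }
  apply Rabs_le. split; [nra|].
  assert (r * (1 - lam) <= 2 * (1 - lam)).
  { destruct (Rle_lt_dec r 0) as [Hr|Hr]; [nra|].
    apply Rmult_le_compat_r; [lra|]. nra. }
  nra.
Qed.

Lemma filterlim_of_abs_bound {T : Type} {F : (T -> Prop) -> Prop} {FF : Filter F}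
  (g e : T -> R) (L : R) :
  F (fun x => Rabs (g x - L) <= e x) -> filterlim e F (locally 0) ->
  filterlim g F (locally L).
Proof.
  intros Hbound He. apply filterlim_locally. intros eps.
  pose proof (proj1 (filterlim_locally (F := F) e 0) He eps) as Heps.
  generalize (filter_and _ _ Hbound Heps). apply filter_imp.
  intros x [Hb Hex]. change (Rabs (g x - L) < eps).
  change (Rabs (e x - 0) < eps) in Hex. rewrite Rminus_0_r in Hex.
  apply Rabs_def2 in Hex. lra.
Qed.

Lemma filterlim_one_minus_left :
  filterlim (fun x => 1 - x) (at_left 1) (at_right 0).
Proof.
  intros P [eps HP]. exists eps. intros x Hx Hlt. apply HP; [|lra].
  change (Rabs (1 - x - 0) < eps). change (Rabs (x - 1) < eps) in Hx.
  rewrite Rminus_0_r, <- Rabs_Ropp. replace (- (1 - x)) with (x - 1) by ring.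
  exact Hx.
Qed.

Lemma filterlim_inv_neg_ln_left :
  filterlim (fun x => / (- ln (1 - x))) (at_left 1) (locally 0).
Proof.
  apply (filterlim_comp _ _ _ (fun x => 1 - x) (fun t => / (- ln t)) _ (at_right 0));
    [apply filterlim_one_minus_left|].
  apply (filterlim_comp _ _ _ ln (fun y => / (- y)) _ (Rbar_locally m_infty));
    [apply is_lim_ln_0|].
  apply (filterlim_comp _ _ _ Ropp Rinv _ (Rbar_locally p_infty));
    [apply (filterlim_Rbar_opp m_infty)|].
  apply (filterlim_Rbar_inv p_infty). discriminate.
Qed.

Lemma error_vanishes (C : R) :
  filterlim (fun x => 2 * (1 - x) + C * / (- ln (1 - x))) (at_left 1) (locally 0).
Proof.
  apply (filterlim_comp_2 (F := at_left 1) (G := Rbar_locally 0)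
           (H := Rbar_locally 0) (I := Rbar_locally 0)
           (fun x => 2 * (1 - x)) (fun x => C * / (- ln (1 - x))) Rplus).
  - apply (filterlim_filter_le_1 (F := locally 1)).
    { intros P [e He]. exists e. intros; apply He; auto. }
    replace (Finite 0) with (Finite (2 * (1 - 1))) by (f_equal; ring).
    apply (continuous_mult (fun _ => 2) (fun x => 1 - x)); [apply continuous_const|].
    apply (continuous_minus (fun _ => 1) id); [apply continuous_const | apply continuous_id].
  - apply (filterlim_comp _ _ _ (fun x => / (- ln (1 - x))) (fun u => C * u) _ (locally 0));
      [apply filterlim_inv_neg_ln_left|].
    replace (Finite 0) with (Finite (C * 0)) by (f_equal; ring).
    apply (continuous_mult (fun _ => C) id); [apply continuous_const | apply continuous_id].
  - apply (filterlim_Rbar_plus 0 0 0). unfold is_Rbar_plus; simpl. do 2 f_equal. ring.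
Qed.

Theorem corollary2p3 (d : nat) (hd : (2 <= d)%nat) (F : R -> R -> R)
  (hF : forall lam, 0 < lam < 1 -> is_LL_ccdf d lam (F lam)) :
  filterlim (fun lam => - mean_wait d (F lam) / ln (1 - lam))
    (at_left 1) (locally (1 / (INR d - 1))).
Proof.
  destruct d as [|k]; [lia|].
  replace (INR (S k) - 1) with (INR k) by (rewrite S_INR; ring).
  set (c := ln 2 + ln (INR (S k))).
  apply (filterlim_of_abs_bound _ (fun x => 2 * (1 - x) + (4 * c + 1) * / (- ln (1 - x))));
    [|apply error_vanishes].
  exists (mkposreal (1/2) ltac:(lra)). intros lam Hball Hlt.
  change (Rabs (lam - 1) < 1/2) in Hball. apply Rabs_def2 in Hball.
  assert (Hl : 0 < lam < 1) by lra.
  assert (Hk : (1 <= k)%nat) by lia.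
  destruct (mean_wait_bounds k lam (F lam) Hk Hl (hF lam Hl)) as [Hup Hlow].
  destruct (log_gap (S k) lam ltac:(lia) Hl) as [Hgap1 Hgap2].
  assert (Hm : 0 < - ln (1 - lam)).
  { assert (Hln : ln (1 - lam) < ln 1) by (apply ln_increasing; lra).
    rewrite ln_1 in Hln. lra. }
  assert (Hc : 0 <= c).
  { unfold c. rewrite <- ln_mult by (pose proof (lt_0_INR (S k) ltac:(lia)); lra).
    rewrite <- ln_1. apply ln_le; [lra|]. rewrite S_INR. pose proof (pos_INR k). lra. }
  replace (- mean_wait (S k) (F lam) / ln (1 - lam))
    with (mean_wait (S k) (F lam) / - ln (1 - lam)) by (field; lra).
  apply ratio_estimate; try lra.
  - apply (le_INR 1). exact Hk.
  - unfold c. lra.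
Qed.
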